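(* In the two-party one-way communication (Holevo–Frenkel–Weiner) scenario with no pre-shared correlation between the parties, the utility of communicating one qubit is higher than that of one bit of classical communication: there exist finite sets $\mathcal{X},\mathcal{B}$ and a payoff function $\beta$ on correlations $P(\mathcal{B}|\mathcal{X})$ such that $\sup_{P\in\mathcal{Q}}\beta(P)>\sup_{P\in\mathcal{C}}\beta(P)$.
   Context: Scenario: Alice receives an input $x$ from a finite set $\mathcal{X}$, Bob must output $b$ from a finite set $\mathcal{B}$; a correlation is a conditional distribution $P=(P(b|x))$, and a task is a payoff function $\beta$ assigning a real number to each correlation; the utility of a resource is $\sup\beta(P)$ over the correlations achievable with it. $\mathcal{C}$ (one classical bit, no shared randomness, local randomness allowed): correlations $P(b|x)=\sum_{m\in\{0,1\}}E(m|x)D(b|m)$ with $E(\cdot|x)$ a probability distribution on $\{0,1\}$ for each $x$ and $D(\cdot|m)$ a probability distribution on $\mathcal{B}$ for each $m$. $\mathcal{Q}$ (one qubit, no shared correlation): correlations $P(b|x)=\operatorname{Tr}(\rho_x\pi_b)$, where each $\rho_x$ is a density operator on $\mathbb{C}^2$ and $\{\pi_b\}_{b\in\mathcal{B}}$ is a POVM on $\mathbb{C}^2$ ($\pi_b\ge0$, $\sum_b\pi_b=\mathbb{I}$). *)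

From HB Require Import structures.
From mathcomp Require Import all_boot all_order all_algebra.
From mathcomp Require Import complex.
From mathcomp Require Import boolp classical_sets reals constructive_ereal ereal.
Set Implicit Arguments. Unset Strict Implicit. Unset Printing Implicit Defensive.
Import Order.TTheory GRing.Theory Num.Theory.
Local Open Scope ring_scope.

Section HFW.
Variable R : realType.

Definition stochastic (I J : finType) (f : I -> J -> R) : Prop :=
  (forall i j, 0 <= f i j) /\ (forall i, \sum_(j : J) f i j = 1).

(* Correlations P(b|x) achievable with one classical bit, no shared randomness,
   local randomness allowed: P(b|x) = sum_{m in {0,1}} E(m|x) D(b|m). *)
Definition classical_corr (X B : finType) (P : X -> B -> R) : Prop :=
  exists (E : X -> 'I_2 -> R) (D : 'I_2 -> B -> R),
    stochastic E /\ stochastic D /\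
    forall x b, P x b = \sum_(m < 2) E x m * D m b.

Notation Mx := 'M[R[i]]_2.

(* positive semidefinite: v^dagger A v >= 0 (i.e. real and nonnegative) for all v;
   in R[i], 0 <= z means Im z = 0 and Re z >= 0. *)
Definition psd (A : Mx) : Prop :=
  forall v : 'cV[R[i]]_2, 0 <= ((map_mx (@conjc R) v)^T *m A *m v) 0 0.

Definition density (rho : Mx) : Prop := psd rho /\ \tr rho = 1.

Definition povm (B : finType) (pi : B -> Mx) : Prop :=
  (forall b, psd (pi b)) /\ \sum_(b : B) pi b = 1%:M.

(* Correlations achievable with one qubit, no shared correlation:
   P(b|x) = Tr(rho_x pi_b). *)
Definition quantum_corr (X B : finType) (P : X -> B -> R) : Prop :=
  exists (rho : X -> Mx) (pi : B -> Mx),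
    (forall x, density (rho x)) /\ povm pi /\
    forall x b, real_complex R (P x b) = \tr (rho x *m pi b).

End HFW.

From HB Require Import structures.
From mathcomp Require Import all_boot all_order all_algebra.
From mathcomp Require Import complex.
From mathcomp Require Import boolp classical_sets reals constructive_ereal ereal.
From mathcomp Require Import ring lra.
Set Implicit Arguments. Unset Strict Implicit. Unset Printing Implicit Defensive.
Import Order.TTheory GRing.Theory Num.Theory.
Local Open Scope ring_scope.

(* Take as payoff the absolute value of the determinant of the 3 x 3 matrix
   [P(b|x)].  A one-bit correlation factors as E D through two messages, so
   its matrix has rank at most 2 and the payoff is 0.  A qubit does better:
   preparing |0>, |1>, |+> and measuring the POVM
   {|0><0|/2, |+><+|/2, 1 - |0><0|/2 - |+><+|/2} gives a correlation matrix
   of determinant -1/8. *)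

Lemma det_mulmx_lt_inner (F : fieldType) (m n : nat) (A : 'M[F]_(n, m)) (B : 'M_(m, n)) :
  (m < n)%N -> \det (A *m B) = 0.
Proof.
move=> lt_mn; apply/eqP; rewrite -[_ == 0]negbK -unitfE -unitmxE -row_free_unit.
apply/negP=> /eqP full.
have := leq_trans (mxrankM_maxl A B) (rank_leq_col A).
by rewrite full leqNgt lt_mn.
Qed.

Lemma quad_form_ge0 (R : realDomainType) (a b d x y : R) :
  0 <= a -> 0 <= d -> b ^+ 2 <= a * d -> 0 <= a * x ^+ 2 + 2 * b * x * y + d * y ^+ 2.
Proof.
move=> a0 d0 bad; set q := _ + _ + _.
have aqE : a * q = (a * x + b * y) ^+ 2 + (a * d - b ^+ 2) * y ^+ 2 by rewrite /q; ring.
have aq0 : 0 <= a * q by rewrite aqE addr_ge0 ?sqr_ge0 // mulr_ge0 ?sqr_ge0 ?subr_ge0.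
have [a_eq0 | a_neq0] := eqVneq a 0; last first.
  by rewrite -(@pmulr_rge0 _ a) // lt_def a_neq0 a0.
have b_eq0 : b = 0.
  by apply/eqP; rewrite -sqrf_eq0 eq_le sqr_ge0 andbT -(mul0r d) -a_eq0.
by rewrite /q a_eq0 b_eq0 mulr0 !mul0r !add0r mulr_ge0 ?sqr_ge0.
Qed.

Section OneBitVersusOneQubit.
Variable R : realType.
Local Open Scope complex_scope.

Definition corr_mx (n k : nat) (P : 'I_n -> 'I_k -> R) : 'M[R]_(n, k) :=
  \matrix_(x, b) P x b.

Lemma classical_corr_mx (n k : nat) (P : 'I_n -> 'I_k -> R) :
  classical_corr P -> exists (E : 'M_(n, 2)) (D : 'M_(2, k)), corr_mx P = E *m D.
Proof.
move=> [E [D [_ [_ PE]]]]; exists (\matrix_(x, m) E x m), (\matrix_(m, b) D m b).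
by apply/matrixP=> x b; rewrite !mxE PE; apply: eq_bigr=> m _; rewrite !mxE.
Qed.

Lemma det_classical_corr (n : nat) (P : 'I_n -> 'I_n -> R) :
  (2 < n)%N -> classical_corr P -> \det (corr_mx P) = 0.
Proof. by move=> lt2n /classical_corr_mx [E [D ->]]; apply: det_mulmx_lt_inner. Qed.

Definition sym_mx (a b d : R) : 'M[R[i]]_2 :=
  \matrix_(i, j) (if i == j then (if i == 0 then a else d) else b)%:C.

Lemma psd_sym_mx (a b d : R) :
  0 <= a -> 0 <= d -> b ^+ 2 <= a * d -> psd (sym_mx a b d).
Proof.
move=> a0 d0 bad v.
rewrite !mxE !big_ord_recr !big_ord0 !mxE !big_ord_recr !big_ord0 !mxE /=.
rewrite [v ord_max 0]complexE [v (widen_ord _ _) 0]complexE /=.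
set x0 := complex.Re _; set y1 := complex.Im (v ord_max 0).
set x1 := complex.Re _; set y0 := complex.Im _.
rewrite lecE /=; apply/andP; split; first by apply/eqP; ring.
set q := (X in 0 <= X).
have -> : q = (a * x0 ^+ 2 + 2 * b * x0 * x1 + d * x1 ^+ 2)
            + (a * y0 ^+ 2 + 2 * b * y0 * y1 + d * y1 ^+ 2) by rewrite /q; ring.
by rewrite addr_ge0 ?quad_form_ge0.
Qed.

Lemma mxtrace_sym_mx (a b d : R) : \tr (sym_mx a b d) = (a + d)%:C.
Proof. by rewrite /mxtrace !big_ord_recr big_ord0 !mxE /= add0r rmorphD. Qed.

Lemma mxtrace_mul_sym_mx (a b d a' b' d' : R) :
  \tr (sym_mx a b d *m sym_mx a' b' d') = (a * a' + 2 * b * b' + d * d')%:C.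
Proof.
rewrite /mxtrace !big_ord_recr big_ord0 !mxE /= !big_ord_recr !big_ord0 !mxE /=.
by rewrite !add0r -!rmorphM -!rmorphD; congr (_%:C); ring.
Qed.

Lemma add_sym_mx (a b d a' b' d' : R) :
  sym_mx a b d + sym_mx a' b' d' = sym_mx (a + a') (b + b') (d + d').
Proof. by apply/matrixP=> i j; rewrite !mxE -rmorphD; case: ifP=> //; case: ifP. Qed.

Lemma sym_mx1 : sym_mx 1 0 1 = 1%:M.
Proof. by apply/matrixP=> i j; rewrite !mxE; case: (i == j)=> //=; case: ifP. Qed.

Definition qubit_state (x : 'I_3) : 'M[R[i]]_2 :=
  [:: sym_mx 1 0 0; sym_mx 0 0 1; sym_mx (1/2) (1/2) (1/2)]`_x.

Definition qubit_effect (b : 'I_3) : 'M[R[i]]_2 :=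
  [:: sym_mx (1/2) 0 0; sym_mx (1/4) (1/4) (1/4); sym_mx (1/4) (-1/4) (3/4)]`_b.

Definition qubit_corr (x b : 'I_3) : R :=
  (nth [::] [:: [:: 1/2; 1/4; 1/4]; [:: 0; 1/4; 3/4]; [:: 1/4; 1/2; 1/4]] x)`_b.

Lemma density_qubit_state (x : 'I_3) : density (qubit_state x).
Proof.
case: x => [[|[|[|//]]] ?]; rewrite /density mxtrace_sym_mx /=.
- by split; [apply: psd_sym_mx; rewrite ?expr0n /= ?mulr0 | rewrite addr0].
- by split; [apply: psd_sym_mx; rewrite ?expr0n /= ?mul0r | rewrite add0r].
- by split; [apply: psd_sym_mx; lra | congr (_%:C); field].
Qed.

Lemma povm_qubit_effect : povm qubit_effect.
Proof.
split.
  by case=> [[|[|[|//]]] ?]; apply: psd_sym_mx; lra.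
rewrite !big_ord_recr big_ord0 /= add0r !add_sym_mx -sym_mx1.
by congr sym_mx; field.
Qed.

Lemma quantum_qubit_corr : quantum_corr qubit_corr.
Proof.
exists qubit_state, qubit_effect; split; [exact: density_qubit_state | split].
  exact: povm_qubit_effect.
case=> [[|[|[|//]]] ?] [[|[|[|//]]] ?];
  by rewrite mxtrace_mul_sym_mx; congr (_%:C); rewrite /qubit_corr /=; field.
Qed.

Lemma det_qubit_corr : \det (corr_mx qubit_corr) = - (1 / 8).
Proof.
rewrite (expand_det_row _ ord0) !big_ord_recr big_ord0 /cofactor /=.
rewrite !(expand_det_row _ ord0) !big_ord_recr !big_ord0 /cofactor /= !det_mx11 !mxE.
by rewrite /qubit_corr /= /bump /=; field.
Qed.

End OneBitVersusOneQubit.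

Local Open Scope classical_set_scope.

Theorem theorem2 (R : realType) :
  exists (X B : finType) (beta : (X -> B -> R) -> R),
    (ereal_sup [set (beta P)%:E | P in @classical_corr R X B]
     < ereal_sup [set (beta P)%:E | P in @quantum_corr R X B])%E.
Proof.
exists 'I_3, 'I_3, (fun P => `|\det (corr_mx P)|).
apply: (@le_lt_trans _ _ 0%:E).
  by apply: ge_ereal_sup=> _ [P classicalP <-]; rewrite det_classical_corr ?normr0.
apply: (@lt_le_trans _ _ `|\det (corr_mx (@qubit_corr R))|%:E).
  by rewrite lte_fin det_qubit_corr normrN ger0_norm; lra.
by apply: ereal_sup_ubound; exists (@qubit_corr R); first exact: quantum_qubit_corr.
Qed.
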